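(* For every $n\geq 2$ there exists a finitely generated subgroup $H\leqslant F_n\times F_n$ such that $\mathrm{Ord}_H(F_n\times F_n)=\mathbb{N}$. In particular, $F_n\times F_n$ does not have bounded subgroup spectra.
   Context: $F_n$ is the free group of rank $n$; $\mathbb{N}$ contains $0$. For a group $G$, a subset $S\subseteq G$ and $g\in G$, $\mathrm{Ord}_S(g)=\min\{k\geq 1: g^k\in S\}$ if such $k$ exists and $0$ otherwise; $\mathrm{Ord}_S(G)=\{\mathrm{Ord}_S(g):g\in G\}$. A group has bounded subgroup spectra if $\mathrm{Ord}_H(G)$ is bounded for every finitely generated $H\leqslant G$. *)

(* Concrete model of the free group F_n as freely reduced
   words over the alphabet 'I_n x bool (bool = "inverse letter"). *)
From mathcomp Require Import all_boot.
Set Implicit Arguments. Unset Strict Implicit. Unset Printing Implicit Defensive.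

Section FreeGroup.
Variable n : nat.

(* a letter (i, false) is the generator x_i, (i, true) is x_i^{-1} *)
Definition letter := ('I_n * bool)%type.
Definition word := seq letter.

Definition linv (x : letter) : letter := (x.1, ~~ x.2).

Definition push (x : letter) (w : word) : word :=
  match w with
  | y :: w' => if y == linv x then w' else x :: w
  | [::] => [:: x]
  end.

Definition reduce (w : word) : word := foldr push [::] w.

Definition reduced (w : word) : bool := sorted (fun x y => y != linv x) w.

Definition fg_one : word := [::].
Definition fg_mul (u v : word) : word := reduce (u ++ v).
Definition fg_inv (u : word) : word := rev (map linv u).

End FreeGroup.

(* the direct product F_n x F_n; elements are pairs of words,
   canonically represented by pairs of reduced words *)
Definition FF (n : nat) := (word n * word n)%type.
Definition ff_one n : FF n := (fg_one n, fg_one n).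
Definition ff_mul n (g h : FF n) : FF n := (fg_mul g.1 h.1, fg_mul g.2 h.2).
Definition ff_inv n (g : FF n) : FF n := (fg_inv g.1, fg_inv g.2).
Definition ff_red n (g : FF n) : FF n := (reduce g.1, reduce g.2).
Definition ff_pow n (g : FF n) (k : nat) : FF n :=
  iter k (ff_mul g) (ff_one n).

(* the subgroup <S> of F_n x F_n generated by the finite list S,
   as a set of canonical (reduced) representatives *)
Inductive gen_sub n (S : seq (FF n)) : FF n -> Prop :=
| gen_one : gen_sub S (ff_one n)
| gen_gen s : s \in S -> gen_sub S (ff_red s)
| gen_inv g : gen_sub S g -> gen_sub S (ff_inv g)
| gen_mul g h : gen_sub S g -> gen_sub S h -> gen_sub S (ff_mul g h).

Definition in_H n (S : seq (FF n)) (g : FF n) : Prop := gen_sub S (ff_red g).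

(* Ord_H(g) = m, written out: m is the least k >= 1 with g^k in H,
   or m = 0 if no such k exists *)
Definition is_Ord n (S : seq (FF n)) (g : FF n) (m : nat) : Prop :=
  (0 < m /\ in_H S (ff_pow g m) /\ forall k, 0 < k < m -> ~ in_H S (ff_pow g k))
  \/ (m = 0 /\ forall k, 0 < k -> ~ in_H S (ff_pow g k)).

Definition Ord_spectrum_full n (S : seq (FF n)) : Prop :=
  forall m : nat, exists g : FF n, is_Ord S g m.

Definition bounded_subgroup_spectra_FF (n : nat) : Prop :=
  forall S : seq (FF n), exists B : nat,
    forall (g : FF n) (m : nat), is_Ord S g m -> m <= B.

(* H is generated by the diagonal of F_n x F_n and by pairs (r, r') encoding
   finitely many relations r = r', so (u, v) lies in H exactly when u = v in
   the finitely presented group Q = F_n / << r r'^-1 >>, and Ord_H((u, 1)) is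
   the order of u in Q.  The relations force the conjugates t_j = s^(x0^j) of
   an element s of Q to satisfy the Coxeter relations of type A, so the
   Coxeter element t_0 ... t_(L-1) has order dividing L + 1.  Conversely Q acts
   on (Cantor space) x Z x Z, with x0, x1 acting through Thompson's generators
   and s through an involution exchanging two cones; there t_0 ... t_(L-1)
   moves 1^k 0^oo to 1^(k+1) 0^oo for 1 <= k <= L, so its order is exactly
   L + 1, while the free generator a shifts the last coordinate and has
   infinite order.  As only two free generators a, b are available, x0, x1, s
   are realised as commutators [b, a^-d b a^d] for d = 1, 3, 7; these move
   only the fibre over (0, 0) of Z x Z because {0, 1, 3, 7} is a Sidon set. *)

From HB Require Import structures.
From mathcomp Require Import all_boot ssralg ssrnum ssrint zify boolp.
Set Implicit Arguments. Unset Strict Implicit. Unset Printing Implicit Defensive.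
Import GRing.Theory Num.Theory.
Local Open Scope quotient_scope.

Section FreeReduction.
Variable n : nat.
Implicit Types (x y : letter n) (u v w r : word n).

Lemma linvK : involutive (@linv n).
Proof. by case=> i b; rewrite /linv /= negbK. Qed.

Lemma push_linvK x w : reduced w -> push x (push (linv x) w) = w.
Proof.
case: w => [|y w] /= red_yw; first by rewrite eqxx.
case: ifP => [/eqP | _]; last by rewrite /= eqxx.
rewrite linvK => <-; case: w red_yw => [|z w] //= /andP[/negbTE ->] //.
Qed.

Lemma reduced_push x w : reduced w -> reduced (push x w).
Proof.
case: w => [|y w] //= red_w.
case: ifP => [_ | yNx]; first exact: path_sorted red_w.
by rewrite /reduced /= yNx.
Qed.

Lemma reduced_foldr_push r w : reduced r -> reduced (foldr (@push n) r w).
Proof. by move=> red_r; elim: w => //= x w; apply: reduced_push. Qed.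

Lemma reduced_reduce w : reduced (reduce w).
Proof. exact: reduced_foldr_push. Qed.

Lemma reduce_id w : reduced w -> reduce w = w.
Proof.
elim: w => [|x w IHw] // red_xw; rewrite /= IHw; last exact: path_sorted red_xw.
by case: w red_xw {IHw} => [|y w] //= /andP[/negbTE ->].
Qed.

Lemma reduce_idem w : reduce (reduce w) = reduce w.
Proof. exact/reduce_id/reduced_reduce. Qed.

Lemma foldr_push_reduce r u : reduced r ->
  foldr (@push n) r (reduce u) = foldr (@push n) r u.
Proof.
move=> red_r; elim: u => [|x u IHu] //=; rewrite -IHu.
case: (reduce u) => [|y w] //=.
case: ifP => [/eqP -> | _] //=.
by rewrite push_linvK // reduced_foldr_push.
Qed.

Lemma reduce_cat u v : reduce (u ++ v) = foldr (@push n) (reduce v) u.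
Proof. exact: foldr_cat. Qed.

Lemma reduce_catl u v : reduce (reduce u ++ v) = reduce (u ++ v).
Proof. by rewrite !reduce_cat foldr_push_reduce // reduced_reduce. Qed.

Lemma reduce_catr u v : reduce (u ++ reduce v) = reduce (u ++ v).
Proof. by rewrite !reduce_cat reduce_idem. Qed.

Lemma fg_inv_cat u v : fg_inv (u ++ v) = fg_inv v ++ fg_inv u.
Proof. by rewrite /fg_inv map_cat rev_cat. Qed.

Lemma fg_invK : involutive (@fg_inv n).
Proof. by move=> u; rewrite /fg_inv map_rev revK -map_comp (eq_map linvK) map_id. Qed.

Lemma reduce_catV u : reduce (u ++ fg_inv u) = [::].
Proof.
elim: u => [|x u IHu] //.
rewrite -cat1s fg_inv_cat -catA -reduce_catr catA.
by rewrite -[reduce ((u ++ _) ++ _)]reduce_catl IHu /= eqxx.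
Qed.

Lemma reduce_Vcat u : reduce (fg_inv u ++ u) = [::].
Proof. by rewrite -{2}(fg_invK u) reduce_catV. Qed.

Lemma reduce_cancelr u v : reduce (u ++ fg_inv v ++ v) = reduce u.
Proof. by rewrite -reduce_catr reduce_Vcat cats0. Qed.

Lemma reduce_cancell u v : reduce (u ++ fg_inv u ++ v) = reduce v.
Proof. by rewrite catA -reduce_catl reduce_catV. Qed.

Lemma reduced_inv w : reduced w -> reduced (fg_inv w).
Proof.
rewrite /reduced /fg_inv rev_sorted sorted_map; apply: sub_sorted => x y /=.
by apply: contra => /eqP ->; rewrite linvK.
Qed.

Lemma reduce_inv u : reduce (fg_inv u) = fg_inv (reduce u).
Proof.
have -> : reduce (fg_inv u) = reduce (fg_inv (reduce u)).
  rewrite -[fg_inv u]cats0 -(reduce_catV (reduce u)) reduce_catr catA.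
  by rewrite -reduce_catl reduce_catr reduce_Vcat.
by rewrite reduce_id // reduced_inv // reduced_reduce.
Qed.

End FreeReduction.

Section DiagonalQuotient.
Variables (n : nat) (S : seq (FF n)).
Hypothesis diag_in_S : forall i : 'I_n, ([:: (i, false)], [:: (i, false)]) \in S.
Implicit Types (u v w : word n).

Lemma in_H_gen s : s \in S -> in_H S s.
Proof. exact: gen_gen. Qed.

Lemma in_H_cat u v u' v' :
  in_H S (u, v) -> in_H S (u', v') -> in_H S (u ++ u', v ++ v').
Proof.
move=> H1 H2; have := gen_mul H1 H2.
by rewrite /ff_mul /fg_mul /= !reduce_catl !reduce_catr.
Qed.

Lemma in_H_inv u v : in_H S (u, v) -> in_H S (fg_inv u, fg_inv v).
Proof. by move/gen_inv; rewrite /in_H /ff_red /ff_inv /= !reduce_inv. Qed.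

Lemma in_H_diag u : in_H S (u, u).
Proof.
elim: u => [|[i b] u IHu]; first exact: gen_one.
apply: (@in_H_cat [:: (i, b)] [:: (i, b)]) IHu.
have Hi : in_H S ([:: (i, false)], [:: (i, false)]) by apply: in_H_gen.
by case: b => //; apply: (in_H_inv Hi).
Qed.

Lemma in_H_reduceE u v u' v' :
  reduce u = reduce u' -> reduce v = reduce v' -> in_H S (u, v) -> in_H S (u', v').
Proof. by rewrite /in_H /ff_red /= => -> ->. Qed.

Lemma in_H_sym u v : in_H S (u, v) -> in_H S (v, u).
Proof.
move=> Huv; have := in_H_cat (in_H_diag v) (in_H_cat (in_H_inv Huv) (in_H_diag u)).
by apply: in_H_reduceE; rewrite ?reduce_cancelr ?reduce_cancell.
Qed.

Lemma in_H_trans v u w : in_H S (u, v) -> in_H S (v, w) -> in_H S (u, w).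
Proof.
move=> Huv Hvw; have := in_H_cat Huv (in_H_cat (in_H_inv (in_H_diag v)) Hvw).
by apply: in_H_reduceE; rewrite ?reduce_cancelr ?reduce_cancell.
Qed.

Definition in_Hb u v := `[< in_H S (u, v) >].

Lemma in_Hb_refl : reflexive in_Hb.
Proof. by move=> u; apply/asboolP/in_H_diag. Qed.

Lemma in_Hb_sym : symmetric in_Hb.
Proof. by move=> u v; apply/asboolP/asboolP => /in_H_sym. Qed.

Lemma in_Hb_trans : transitive in_Hb.
Proof. by move=> v u w /asboolP Huv /asboolP Hvw; apply/asboolP/(in_H_trans Huv). Qed.

Definition in_H_equiv := EquivRel in_Hb in_Hb_refl in_Hb_sym in_Hb_trans.
Definition quotH := {eq_quot in_H_equiv}.
HB.instance Definition _ := Quotient.on quotH.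
HB.instance Definition _ := Choice.on quotH.

Local Notation pi := \pi_quotH.
Local Open Scope group_scope.

Lemma piH_eq u v : pi u = pi v <-> in_H S (u, v).
Proof.
by split=> [/eqP | uv]; [rewrite eqmodE => /asboolP | apply/eqP; rewrite eqmodE; apply/asboolP].
Qed.

Definition quotH_mul := lift_op2 quotH (@cat (letter n)).
Definition quotH_inv := lift_op1 quotH (@fg_inv n).
Definition quotH_one := pi [::].

Lemma in_H_repr u : in_H S (repr (pi u), u).
Proof. by apply/piH_eq; rewrite reprK. Qed.

Lemma quotH_mul_pi u v : quotH_mul (pi u) (pi v) = pi (u ++ v).
Proof. by unlock quotH_mul; apply/piH_eq/in_H_cat; apply: in_H_repr. Qed.

Lemma quotH_inv_pi u : quotH_inv (pi u) = pi (fg_inv u).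
Proof. by unlock quotH_inv; apply/piH_eq/in_H_inv/in_H_repr. Qed.

Lemma quotH_mulA : associative quotH_mul.
Proof.
move=> x y z; elim/quotW: x => u; elim/quotW: y => v; elim/quotW: z => w.
by rewrite !quotH_mul_pi catA.
Qed.

Lemma quotH_mul1g : left_id quotH_one quotH_mul.
Proof. by move=> x; elim/quotW: x => u; rewrite quotH_mul_pi. Qed.

Lemma quotH_mulg1 : right_id quotH_one quotH_mul.
Proof. by move=> x; elim/quotW: x => u; rewrite quotH_mul_pi cats0. Qed.

Lemma quotH_mulVg : left_inverse quotH_one quotH_inv quotH_mul.
Proof.
move=> x; elim/quotW: x => u; rewrite quotH_inv_pi quotH_mul_pi; apply/piH_eq.
by apply: (in_H_reduceE _ _ (in_H_diag [::])); rewrite ?reduce_Vcat.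
Qed.

Lemma quotH_mulgV : right_inverse quotH_one quotH_inv quotH_mul.
Proof.
move=> x; elim/quotW: x => u; rewrite quotH_inv_pi quotH_mul_pi; apply/piH_eq.
by apply: (in_H_reduceE _ _ (in_H_diag [::])); rewrite ?reduce_catV.
Qed.

HB.instance Definition _ := isGroup.Build quotH
  quotH_mulA quotH_mul1g quotH_mulg1 quotH_mulVg quotH_mulgV.

Lemma piH_cat u v : pi (u ++ v) = pi u * pi v.
Proof. by rewrite -quotH_mul_pi. Qed.

Lemma piH_inv u : pi (fg_inv u) = (pi u)^-1.
Proof. by rewrite -quotH_inv_pi. Qed.

Lemma piH_nil : pi [::] = 1.
Proof. by []. Qed.

Lemma piH_reduce u : pi (reduce u) = pi u.
Proof. by apply/piH_eq/(in_H_reduceE _ _ (in_H_diag u)); rewrite ?reduce_idem. Qed.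

Lemma piH_ff_pow (g : FF n) k :
  pi (ff_pow g k).1 = pi g.1 ^+ k /\ pi (ff_pow g k).2 = pi g.2 ^+ k.
Proof.
elim: k => [|k [IH1 IH2]] //=.
by rewrite /fg_mul !piH_reduce !piH_cat IH1 IH2 !expgS.
Qed.

Lemma in_H_ff_pow (u : word n) k : in_H S (ff_pow (u, [::]) k) <-> pi u ^+ k = 1.
Proof.
have [E1 E2] := piH_ff_pow (u, [::]) k.
case: (ff_pow _ _) E1 E2 => a b /= E1 E2.
by rewrite -piH_eq E1 E2 piH_nil expg1n.
Qed.

End DiagonalQuotient.

Section GroupFacts.
Local Open Scope group_scope.
Variable G : groupType.
Implicit Types x y z : G.

Lemma conjg_id x y : commute x y -> x ^ y = x.
Proof. by move=> cxy; rewrite conjgE cxy mulKg. Qed.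

Lemma commuteJ x y z : commute x y -> commute x z -> commute x (y ^ z).
Proof. by move=> cxy cxz; rewrite conjgE; do 2?apply: commuteM => //; apply: commuteV. Qed.

Lemma commuteJ2 x y z : commute x y -> commute (x ^ z) (y ^ z).
Proof. by move=> cxy; rewrite /commute -!conjMg cxy. Qed.

Lemma braid_of_involutions x y :
  x ^+ 2 = 1 -> y ^+ 2 = 1 -> (x * y) ^+ 3 = 1 -> x * y * x = y * x * y.
Proof.
move=> x2 y2 xy3.
have xV : x^-1 = x by apply: mulg1_eq; rewrite -expg2 x2.
have yV : y^-1 = y by apply: mulg1_eq; rewrite -expg2 y2.
have : (x * y * x) * (y * x * y) = 1 by rewrite -xy3 !expgS expg0 mulg1 !mulgA.
by move/mulg1_eq; rewrite !invgM xV yV mulgA.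
Qed.

Lemma prod_conjg_expg x y K :
  \prod_(k < K) x ^ (y ^+ k) = (x / y) ^+ K * y ^+ K.
Proof.
elim: K => [|K IHK]; first by rewrite big_ord0 mulg1.
rewrite big_ord_recr /= IHK conjgE expgSr expgS.
by rewrite !mulgA mulgK mulgVK.
Qed.

End GroupFacts.

Section CoxeterA.
Local Open Scope group_scope.
Variables (G : groupType) (t : nat -> G).
Hypothesis t_sq : forall i, t i ^+ 2 = 1.
Hypothesis t_braid : forall i, t i * t i.+1 * t i = t i.+1 * t i * t i.+1.
Hypothesis t_far : forall i j, i.+2 <= j -> commute (t i) (t j).

Definition coxeter a L := \prod_(i < L) t (a + i).

Lemma coxeter0 a : coxeter a 0 = 1.
Proof. exact: big_ord0. Qed.

Lemma coxeterS a L : coxeter a L.+1 = t a * coxeter a.+1 L.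
Proof. by rewrite /coxeter big_ord_recl addn0; under eq_bigr do rewrite lift0 -addSnnS. Qed.

Lemma commute_coxeter i a L : i.+2 <= a -> commute (t i) (coxeter a L).
Proof. by move=> le_ia; apply: commute_prod => j _; apply/t_far/(leq_trans le_ia)/leq_addr. Qed.

Lemma coxeter_shift a L i :
  a <= i < a + L -> coxeter a L.+1 * t i = t i.+1 * coxeter a L.+1.
Proof.
elim: L a => [|L IHL] a /andP[le_ai lt_i]; first by rewrite addn0 ltnNge le_ai in lt_i.
rewrite coxeterS; case: (ltngtP a i) le_ai => // [lt_ai | <-] _.
  by rewrite -mulgA IHL ?lt_ai ?addSnnS // !mulgA t_far.
by rewrite coxeterS -!mulgA -(@commute_coxeter a a.+2 L (leqnn _)) !mulgA t_braid.
Qed.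

Lemma coxeter_conjV a L k :
  k <= L -> t a ^ (coxeter a L.+1)^-1 ^+ k = t (a + k).
Proof.
elim: k => [|k IHk] lt_kL; first by rewrite expg0 conjg1 addn0.
rewrite expgSr conjgM IHk ?(ltnW lt_kL) // conjgE invgK.
by rewrite mulgA coxeter_shift ?mulgK ?addnS // leq_addr /= ltn_add2l.
Qed.

Lemma coxeter_order a L : coxeter a L ^+ L.+1 = 1.
Proof.
elim: L a => [|L IHL] a; first by rewrite coxeter0 expg1n.
set c := coxeter a L.+1.
(* The powers of c^-1 conjugate t_a to t_a, ..., t_(a+L), whose product is c. *)
have c_tele : c = c^-1 ^+ L.+1.
  rewrite {1}/c /coxeter.
  under eq_bigr => k _ do rewrite -(coxeter_conjV a (ltnSE (ltn_ord k))).
  by rewrite prod_conjg_expg invgK /c coxeterS mulgA -expg2 t_sq mul1g IHL mul1g.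
by rewrite expgSr {2}c_tele expVgn mulgV.
Qed.
End CoxeterA.

Section ThreeGeneratorPresentation.
Local Open Scope group_scope.
Variables (G : groupType) (x0 x1 s : G).
Let t j := s ^ (x0 ^+ j).
Let y := x0^-1 * x1.
Let z := x1 ^ (x0 ^+ 2).
Hypothesis y_z : commute y z.
Hypothesis y_t2 : commute y (t 2).
Hypothesis y_t3 : commute y (t 3).
Hypothesis s_z : commute s z.
Hypothesis s_t2 : commute s (t 2).
Hypothesis s_t3 : commute s (t 3).
Hypothesis s_t1_cube : (s * t 1) ^+ 3 = 1.
Hypothesis s_sq : s ^+ 2 = 1.

Lemma translate_conj j i : t j ^ (x0 ^+ i) = t (j + i).
Proof. by rewrite /t -conjgM -expgnDr. Qed.

Lemma z_conj_translate j : commute y (t j) -> t j.+1 ^ z = t j.+2.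
Proof.
move=> y_tj; have -> : z = x0^-1 * y * x0 ^+ 2 by rewrite /z /y conjgE expg2 invgM !mulgA.
have tV : t j.+1 ^ x0^-1 = t j by rewrite /t expgSr conjgM conjgK.
rewrite (conjgM _ (x0^-1 * y)) (conjgM _ x0^-1) tV.
by rewrite (conjg_id (commute_sym y_tj)) translate_conj addn2.
Qed.

Lemma commute_y_s_translates k :
  [/\ commute y (t k.+2), commute y (t k.+3), commute s (t k.+2) & commute s (t k.+3)].
Proof.
elim: k => [|k [yt2 yt3 st2 st3]]; first by [].
rewrite -(z_conj_translate yt2); split=> //; exact: commuteJ.
Qed.

Lemma commute_s_translate j : 2 <= j -> commute s (t j).
Proof. by case: j => [|[|k]] // _; case: (commute_y_s_translates k). Qed.

Lemma translate_far i j : i.+2 <= j -> commute (t i) (t j).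
Proof.
move=> le_ij; have le_i_j : i <= j by rewrite ltnW // ltnW.
rewrite -(subnK le_i_j) -translate_conj; apply/commuteJ2/commute_s_translate.
by rewrite leq_subRL // addn2.
Qed.

Lemma translate_sq j : t j ^+ 2 = 1.
Proof. by rewrite -conjXg s_sq conj1g. Qed.

Lemma translate_braid j : t j * t j.+1 * t j = t j.+1 * t j * t j.+1.
Proof.
by rewrite -add1n -translate_conj -!conjMg braid_of_involutions ?translate_sq.
Qed.

Lemma presented_coxeter_order L : coxeter t 0 L ^+ L.+1 = 1.
Proof. exact: (coxeter_order translate_sq translate_braid translate_far). Qed.
End ThreeGeneratorPresentation.

Definition cantor := nat -> bool.
Definition scons (b : bool) (p : cantor) : cantor := fun i => if i is j.+1 then p j else b.
Definition stail (p : cantor) : cantor := fun i => p i.+1.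

Lemma scons_eta p : p = scons (p 0) (stail p).
Proof. by apply: funext => -[]. Qed.

Ltac split_bits p k :=
  match k with
  | O => idtac
  | S ?k' => rewrite (scons_eta p); move: (p 0) (stail p) => ? {}p; split_bits p k'
  end.

Ltac cantor_cases p k := split_bits p k; by repeat match goal with b : bool |- _ => case: b end.

(* Prefix replacements: [x0] and [x1] are Thompson's generators, [sw]
   exchanges the cones [10] and [110]. *)
Definition x0 (p : cantor) : cantor :=
  match p 0, p 1 with
  | false, _ => scons false p
  | true, false => scons false (scons true (stail (stail p)))
  | true, true => stail p
  end.

Definition x0V (p : cantor) : cantor :=
  match p 0, p 1 with
  | true, _ => scons true p
  | false, true => scons true (scons false (stail (stail p)))
  | false, false => stail p
  end.

Definition x1 (p : cantor) : cantor := if p 0 then scons true (x0 (stail p)) else p.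
Definition x1V (p : cantor) : cantor := if p 0 then scons true (x0V (stail p)) else p.

Definition sw (p : cantor) : cantor :=
  match p 0, p 1, p 2 with
  | true, false, _ => scons true p
  | true, true, false => stail p
  | _, _, _ => p
  end.

Lemma x0K : cancel x0 x0V. Proof. move=> p; cantor_cases p 3. Qed.
Lemma x0VK : cancel x0V x0. Proof. move=> p; cantor_cases p 3. Qed.
Lemma x1K : cancel x1 x1V. Proof. move=> p; cantor_cases p 4. Qed.
Lemma x1VK : cancel x1V x1. Proof. move=> p; cantor_cases p 4. Qed.
Lemma swK : involutive sw. Proof. move=> p; cantor_cases p 4. Qed.

Definition fconj j (f : cantor -> cantor) := iter j x0V \o f \o iter j x0.
Definition y_c := x0V \o x1.
Definition z_c := fconj 2 x1.
Definition t_c j := fconj j sw.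

Lemma comm_yz_c : y_c \o z_c =1 z_c \o y_c. Proof. move=> p; cantor_cases p 8. Qed.
Lemma comm_yt2_c : y_c \o t_c 2 =1 t_c 2 \o y_c. Proof. move=> p; cantor_cases p 9. Qed.
Lemma comm_yt3_c : y_c \o t_c 3 =1 t_c 3 \o y_c. Proof. move=> p; cantor_cases p 10. Qed.
Lemma comm_sz_c : sw \o z_c =1 z_c \o sw. Proof. move=> p; cantor_cases p 9. Qed.
Lemma comm_st2_c : sw \o t_c 2 =1 t_c 2 \o sw. Proof. move=> p; cantor_cases p 9. Qed.
Lemma comm_st3_c : sw \o t_c 3 =1 t_c 3 \o sw. Proof. move=> p; cantor_cases p 10. Qed.
Lemma st1_cube_c : iter 3 (sw \o t_c 1) =1 id. Proof. move=> p; cantor_cases p 8. Qed.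

Definition pt (k : nat) : cantor := fun i => i < k.

Lemma ptS k : pt k.+1 = scons true (pt k).
Proof. by apply: funext => -[]. Qed.

Lemma x0_pt k : x0 (pt k.+2) = pt k.+1.
Proof. by rewrite !ptS. Qed.

Lemma iter_x0_pt j i : iter j x0 (pt (i.+1 + j)) = pt i.+1.
Proof. by elim: j i => [|j IHj] i; rewrite ?addn0 // iterSr addnS x0_pt -addSn IHj. Qed.

Lemma x0V_pt k : x0V (pt k.+1) = pt k.+2.
Proof. by rewrite !ptS. Qed.

Lemma iter_x0V_pt j i : iter j x0V (pt i.+1) = pt (i.+1 + j).
Proof. by elim: j => [|j IHj]; rewrite ?addn0 // iterS IHj addnS x0V_pt. Qed.

Lemma iter_x0_head k p : p 0 = false -> iter k x0 p 0 = false.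
Proof. by move=> p0; elim: k => //= k; rewrite /x0; case: (iter k x0 p 0). Qed.

Lemma iter_x0K j : cancel (iter j x0) (iter j x0V).
Proof. by elim: j => // j IHj p; rewrite iterSr iterS x0K IHj. Qed.

Lemma t_c_fix j p : iter j x0 p 0 = false -> t_c j p = p.
Proof. by rewrite /t_c /fconj /= {1}/sw => ->; rewrite iter_x0K. Qed.

Lemma t_c_low j i : 0 < i <= j -> t_c j (pt i) = pt i.
Proof.
case: i => [|i] // /andP[_ le_ij]; apply: t_c_fix.
rewrite -(subnK (ltnW le_ij)) iterD -add1n iter_x0_pt.
have [k ->] : exists k, j - i = k.+1 by exists (j - i).-1; rewrite prednK // subn_gt0.
by rewrite iterSr iter_x0_head.
Qed.

Lemma t_c_pt j i : t_c j (pt (j + i.+1)) = iter j x0V (sw (pt i.+1)).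
Proof. by rewrite /t_c /fconj /= addnC iter_x0_pt. Qed.

Lemma t_c_up j : t_c j (pt j.+1) = pt j.+2.
Proof.
rewrite -[j.+1]addn1 t_c_pt (_ : sw (pt 1) = pt 2); last by apply: funext => -[|[]].
by rewrite iter_x0V_pt add2n addn1.
Qed.

Lemma t_c_high j k : t_c j (pt (j + k.+3)) = pt (j + k.+3).
Proof. by rewrite t_c_pt iter_x0V_pt addnC. Qed.

Definition coxeter_c a L := foldr (fun i f => t_c i \o f) id (iota a L).

Lemma coxeter_cS a L : coxeter_c a L.+1 = t_c a \o coxeter_c a.+1 L.
Proof. by []. Qed.

Lemma coxeter_c_low a L i : 0 < i <= a -> coxeter_c a L (pt i) = pt i.
Proof.
elim: L a => [|L IHL] a /andP[i_gt0 le_ia] //.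
by rewrite coxeter_cS /= IHL ?t_c_low ?i_gt0 // (leqW le_ia).
Qed.

Lemma coxeter_c_shift a L i : a < i <= a + L -> coxeter_c a L (pt i) = pt i.+1.
Proof.
elim: L a => [|L IHL] a /andP[lt_ai le_i]; first by rewrite addn0 leqNgt lt_ai in le_i.
rewrite coxeter_cS /=; case: (ltngtP a.+1 i) lt_ai => // [lt_a1i | <-] _.
  rewrite IHL; last lia.
  have -> : i.+1 = a + (i - a.+2).+3 by lia.
  exact: t_c_high.
by rewrite coxeter_c_low ?t_c_up // leqnn.
Qed.

Lemma iter_coxeter_c L k : k <= L -> iter k (coxeter_c 0 L) (pt 1) = pt k.+1.
Proof.
elim: k => // k IHk lt_kL.
by rewrite iterS IHk ?coxeter_c_shift // ltnW.
Qed.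

Section WordAction.
Variables (n : nat) (T : Type) (f : letter n -> T -> T).
Hypothesis fK : forall c, cancel (f c) (f (linv c)).
Implicit Types (u v w : word n).

Definition act w : T -> T := fun y => foldr f y w.

Lemma act_cat u v : act (u ++ v) =1 act u \o act v.
Proof. by move=> y; rewrite /act foldr_cat. Qed.

Lemma act_reduce w : act (reduce w) =1 act w.
Proof.
elim: w => // c w IHw y /=; rewrite -IHw.
case: (reduce w) => [|d w'] //=; case: ifP => [/eqP -> | _] //=.
by rewrite -{1}(linvK c) fK.
Qed.

Lemma act_invK w : cancel (act w) (act (fg_inv w)).
Proof.
elim: w => // c w IHw y.
by rewrite -cat1s fg_inv_cat !act_cat /= fK IHw.
Qed.

Lemma act_invVK w : cancel (act (fg_inv w)) (act w).
Proof. by rewrite -{2}(fg_invK w); apply: act_invK. Qed.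

Lemma act_in_H (S : seq (FF n)) g :
  {in S, forall s, act s.1 =1 act s.2} -> in_H S g -> act g.1 =1 act g.2.
Proof.
move=> actS; suff act_gen h : gen_sub S h -> act h.1 =1 act h.2.
  by move=> /act_gen gH y; rewrite -act_reduce -[RHS]act_reduce gH.
elim=> {g h} [|s /actS Hs | h _ IHh | h h' _ IHh _ IHh'] y //=.
- by rewrite !act_reduce.
- by rewrite -{1}(act_invVK h.2 y) -IHh act_invK.
- by rewrite /fg_mul !act_reduce !act_cat /= IHh IHh'.
Qed.

Lemma act_flatten_nseq w k : act (flatten (nseq k w)) =1 iter k (act w).
Proof. by elim: k => //= k IHk y; rewrite act_cat /= IHk. Qed.

Lemma act_ff_pow (g : FF n) k :
  act (ff_pow g k).1 =1 iter k (act g.1) /\ act (ff_pow g k).2 =1 iter k (act g.2).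
Proof.
elim: k => [|k [IH1 IH2]] //; split=> y /=.
  by rewrite /fg_mul act_reduce act_cat /= IH1.
by rewrite /fg_mul act_reduce act_cat /= IH2.
Qed.
End WordAction.

Section LevelMaps.
Local Open Scope ring_scope.

Definition level_perm (l : int) : cantor -> cantor :=
  if l == 1 then x0V else if l == 3 then x1V else if l == 7 then sw else id.
Definition level_permV (l : int) : cantor -> cantor :=
  if l == 1 then x0 else if l == 3 then x1 else if l == 7 then sw else id.

Lemma level_permK l : cancel (level_perm l) (level_permV l).
Proof.
rewrite /level_perm /level_permV.
by case: ifP => _; [apply: x0VK | case: ifP => _; [apply: x1VK | case: ifP => _ // p; apply: swK]].
Qed.

Lemma level_permVK l : cancel (level_permV l) (level_perm l).
Proof.
rewrite /level_perm /level_permV.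
by case: ifP => _; [apply: x0K | case: ifP => _; [apply: x1K | case: ifP => _ // p; apply: swK]].
Qed.

Lemma level_perm_dead l :
  l \notin [:: 1; 3; 7] -> level_perm l =1 id /\ level_permV l =1 id.
Proof.
by rewrite !inE /level_perm /level_permV => /norP[/negbTE -> /norP[/negbTE -> /negbTE ->]].
Qed.

Definition b_at (l : int) (xe : cantor * int) : cantor * int :=
  if l == 0 then (xe.1, xe.2 + 1) else (if 0 < xe.2 then level_perm l xe.1 else xe.1, xe.2).
Definition bV_at (l : int) (xe : cantor * int) : cantor * int :=
  if l == 0 then (xe.1, xe.2 - 1) else (if 0 < xe.2 then level_permV l xe.1 else xe.1, xe.2).

Lemma b_atK l : cancel (b_at l) (bV_at l).
Proof.
move=> [x e]; rewrite /b_at /bV_at; case: (l == 0) => /=; first by rewrite addrK.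
by case: (0 < e) => //=; rewrite level_permK.
Qed.

Lemma bV_atK l : cancel (bV_at l) (b_at l).
Proof.
move=> [x e]; rewrite /b_at /bV_at; case: (l == 0) => /=; first by rewrite subrK.
by case: (0 < e) => //=; rewrite level_permVK.
Qed.

Lemma b_at_dead l : l \notin [:: 0; 1; 3; 7] -> b_at l =1 id /\ bV_at l =1 id.
Proof.
rewrite inE negb_or => /andP[/negbTE l0 /level_perm_dead[dl dlV]].
by split=> -[x e]; rewrite /b_at /bV_at l0 ?dl ?dlV; case: ifP.
Qed.
End LevelMaps.

Definition state := ((cantor * int) * int)%type.

Definition lift (f : cantor -> cantor) (y : state) : state :=
  let: ((x, e), l) := y in (((if (e == 0%R) && (l == 0%R) then f x else x), e), l).

Section TwoLetterAction.
Local Open Scope ring_scope.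
Variables (n : nat) (i0 i1 : 'I_n).
Hypothesis i01 : i0 != i1.
Implicit Types (c : letter n) (u v w : word n).

Definition lact c (y : state) : state :=
  let: (xe, l) := y in
  if c.1 == i0 then (xe, if c.2 then l - 1 else l + 1)
  else if c.1 == i1 then ((if c.2 then bV_at else b_at) l xe, l)
  else y.

Lemma lactK c : cancel (lact c) (lact (linv c)).
Proof.
case: c => i b [xe l]; rewrite /lact /=.
case: (i == i0) => /=; first by case: b; rewrite /= ?addrK ?subrK.
by case: (i == i1) => //=; case: b => /=; rewrite ?b_atK ?bV_atK.
Qed.

Local Notation act := (act lact).

Definition la : letter n := (i0, false).
Definition lb : letter n := (i1, false).

Definition lifts w f := act w =1 lift f.

Lemma lifts_nil : lifts [::] id.
Proof. by move=> [[x e] l] /=; case: (_ && _). Qed.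

Lemma lifts_cat u v f g : lifts u f -> lifts v g -> lifts (u ++ v) (f \o g).
Proof.
move=> Hu Hv y; rewrite act_cat /= Hv Hu; case: y => [[x e] l] /=.
by case: ((e == 0) && (l == 0)).
Qed.

Lemma lifts_inv w f g : lifts w f -> cancel g f -> lifts (fg_inv w) g.
Proof.
move=> Hw gK [[x e] l]; apply: (can_inj (act_invK lactK w)).
by rewrite (act_invVK lactK) Hw /=; case: ((e == 0) && (l == 0)); rewrite ?gK.
Qed.

Lemma lifts_iter w f k : lifts w f -> iter k (act w) =1 lift (iter k f).
Proof.
move=> Hw; elim: k => [|k IHk] [[x e] l] /=; first by case: (_ && _).
by rewrite IHk Hw /=; case: (_ && _).
Qed.

Lemma lifts_pow w f k : lifts w f -> lifts (flatten (nseq k w)) (iter k f).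
Proof. by move=> Hw y; rewrite act_flatten_nseq (lifts_iter _ Hw). Qed.

Lemma lifts_act_eq u v f g : lifts u f -> lifts v g -> f =1 g -> act u =1 act v.
Proof. by move=> Hu Hv fg y; rewrite Hu Hv; case: y => [[x e] l] /=; rewrite fg. Qed.

Lemma act_nseq_la d xe l : act (nseq d la) (xe, l) = (xe, l + d%:Z).
Proof.
elim: d => [|d IHd]; first by rewrite addr0.
by rewrite /= -/(act (nseq d la) (xe, l)) IHd /lact /= eqxx -addrA -PoszD addn1.
Qed.

Lemma iter_act_la k xe l : iter k (act [:: la]) (xe, l) = (xe, l + k%:Z).
Proof.
elim: k => [|k IHk] /=; first by rewrite addr0.
by rewrite IHk /lact /= eqxx -addrA -PoszD addn1.
Qed.

Lemma act_nseq_laV d xe l : act (nseq d (linv la)) (xe, l) = (xe, l - d%:Z).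
Proof.
elim: d => [|d IHd]; first by rewrite subr0.
by rewrite /= -/(act (nseq d (linv la)) (xe, l)) IHd /lact /= eqxx -addrA -opprD -PoszD addn1.
Qed.

Lemma lact_lb b xe l : lact (i1, b) (xe, l) = ((if b then bV_at else b_at) l xe, l).
Proof. by rewrite /lact /= eq_sym (negbTE i01) eqxx. Qed.

Definition gam d : word n := nseq d (linv la) ++ lb :: nseq d la.

Lemma act_gam d xe l : act (gam d) (xe, l) = (b_at (l + d%:Z) xe, l).
Proof. by rewrite act_cat /= act_nseq_la lact_lb act_nseq_laV addrK. Qed.

Lemma act_gamV d xe l : act (fg_inv (gam d)) (xe, l) = (bV_at (l + d%:Z) xe, l).
Proof.
have -> : fg_inv (gam d) = nseq d (linv la) ++ linv lb :: nseq d la.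
  by rewrite /gam fg_inv_cat -cat1s fg_inv_cat /fg_inv /= !map_nseq !rev_nseq linvK -catA.
by rewrite act_cat /= act_nseq_la lact_lb act_nseq_laV addrK.
Qed.

Definition level_word d : word n := linv lb :: fg_inv (gam d) ++ lb :: gam d.

Lemma lifts_level_word d :
  d \in [:: 1; 3; 7]%N -> lifts (level_word d) (level_permV d%:Z).
Proof.
move=> d137 [[x e] l]; have d0 : d%:Z != 0 by move: d137; rewrite !inE; lia.
rewrite /level_word /= -/(act _ _) act_cat /= act_gam -/(act _ _) lact_lb act_gamV lact_lb.
have [-> | l0] := eqVneq l 0.
  rewrite add0r /b_at /bV_at eqxx (negbTE d0) /= addrK andbT.
  case: (ltrgtP 0 e) => [e_gt0 | e_lt0 | <-] /=; rewrite ?level_permK //.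
  - by rewrite ifT ?level_permK //; lia.
  - by rewrite ifF //; lia.
rewrite andbF /=.
(* {0, 1, 3, 7} has pairwise distinct differences, so one of the levels l and
   l + d carries the identity. *)
have dead : l \notin [:: 0; 1; 3; 7] \/ l + d%:Z \notin [:: 0; 1; 3; 7].
  by move: d137 l0; rewrite !inE; lia.
by case: dead => /b_at_dead[bl blV]; rewrite bl blV /= b_atK.
Qed.
End TwoLetterAction.

Section Construction.
Variables (n : nat) (i0 i1 : 'I_n).
Hypothesis i01 : i0 != i1.
Implicit Types (u v : word n).

Local Notation act := (act (lact i0 i1)).
Local Notation lifts := (lifts i0 i1).

Definition W0 := level_word i0 i1 1.
Definition W1 := level_word i0 i1 3.
Definition Ws := level_word i0 i1 7.
Definition wpow u k := flatten (nseq k u).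
Definition wconj u j := wpow (fg_inv W0) j ++ u ++ wpow W0 j.
Definition Wy := fg_inv W0 ++ W1.
Definition Wz := wconj W1 2.
Definition Wt j := wconj Ws j.
Definition Wcox L := flatten [seq Wt i | i <- iota 0 L].

Definition relators : seq (FF n) :=
  [:: (Wy ++ Wz, Wz ++ Wy); (Wy ++ Wt 2, Wt 2 ++ Wy); (Wy ++ Wt 3, Wt 3 ++ Wy);
      (Ws ++ Wz, Wz ++ Ws); (Ws ++ Wt 2, Wt 2 ++ Ws); (Ws ++ Wt 3, Wt 3 ++ Ws);
      (wpow (Ws ++ Wt 1) 3, [::]); (wpow Ws 2, [::])].

Definition SH : seq (FF n) :=
  [seq ([:: (i, false)], [:: (i, false)]) | i <- enum 'I_n] ++ relators.

Lemma lifts_W0 : lifts W0 x0. Proof. exact: lifts_level_word. Qed.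
Lemma lifts_W1 : lifts W1 x1. Proof. exact: lifts_level_word. Qed.
Lemma lifts_Ws : lifts Ws sw. Proof. exact: lifts_level_word. Qed.

Lemma lifts_wconj u f j : lifts u f -> lifts (wconj u j) (fconj j f).
Proof.
move=> Hu; apply: lifts_cat (lifts_cat Hu (lifts_pow _ lifts_W0)).
exact/lifts_pow/(lifts_inv lifts_W0 x0VK).
Qed.

Lemma lifts_Wy : lifts Wy y_c.
Proof. exact: lifts_cat (lifts_inv lifts_W0 x0VK) lifts_W1. Qed.

Lemma lifts_Wz : lifts Wz z_c.
Proof. exact: lifts_wconj lifts_W1. Qed.

Lemma lifts_Wt j : lifts (Wt j) (t_c j).
Proof. exact: lifts_wconj lifts_Ws. Qed.

Lemma lifts_Wcox L : lifts (Wcox L) (coxeter_c 0 L).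
Proof.
rewrite /Wcox; elim: L 0 => [|L IHL] a; first exact: lifts_nil.
exact: lifts_cat (lifts_Wt a) (IHL a.+1).
Qed.

Lemma relators_act : {in relators, forall s, act s.1 =1 act s.2}.
Proof.
have comm u v f g : lifts u f -> lifts v g -> f \o g =1 g \o f -> act (u ++ v) =1 act (v ++ u).
  by move=> Hu Hv; apply: lifts_act_eq (lifts_cat Hu Hv) (lifts_cat Hv Hu).
move=> s; rewrite !inE.
case/orP=> [/eqP-> | ]; first exact: comm lifts_Wy lifts_Wz comm_yz_c.
case/orP=> [/eqP-> | ]; first exact: comm lifts_Wy (lifts_Wt 2) comm_yt2_c.
case/orP=> [/eqP-> | ]; first exact: comm lifts_Wy (lifts_Wt 3) comm_yt3_c.
case/orP=> [/eqP-> | ]; first exact: comm lifts_Ws lifts_Wz comm_sz_c.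
case/orP=> [/eqP-> | ]; first exact: comm lifts_Ws (lifts_Wt 2) comm_st2_c.
case/orP=> [/eqP-> | ]; first exact: comm lifts_Ws (lifts_Wt 3) comm_st3_c.
case/orP=> /eqP->.
  exact: lifts_act_eq (lifts_pow 3 (lifts_cat lifts_Ws (lifts_Wt 1))) (lifts_nil i0 i1) st1_cube_c.
exact: lifts_act_eq (lifts_pow 2 lifts_Ws) (lifts_nil i0 i1) swK.
Qed.

Lemma SH_act : {in SH, forall s, act s.1 =1 act s.2}.
Proof. by move=> s; rewrite mem_cat => /orP[/mapP[i _ ->] // | /relators_act]. Qed.

Lemma SH_diag i : ([:: (i, false)], [:: (i, false)]) \in SH.
Proof. by rewrite mem_cat map_f ?mem_enum. Qed.

Section PresentedGroup.
Local Notation pi := \pi_(quotH SH_diag).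
Local Open Scope group_scope.

Lemma pi_relator s : s \in relators -> pi s.1 = pi s.2.
Proof. by move=> s_rel; apply/piH_eq/in_H_gen; rewrite -surjective_pairing mem_cat s_rel orbT. Qed.

Lemma pi_commute u v : (u ++ v, v ++ u) \in relators -> commute (pi u) (pi v).
Proof. by move/pi_relator; rewrite /= !piH_cat. Qed.

Lemma pi_wpow u k : pi (wpow u k) = pi u ^+ k.
Proof. by elim: k => //= k IHk; rewrite piH_cat -/(flatten _) IHk expgS. Qed.

Lemma pi_wconj u j : pi (wconj u j) = pi u ^ pi W0 ^+ j.
Proof. by rewrite !piH_cat !pi_wpow piH_inv expVgn conjgE. Qed.

Lemma pi_Wcox L : pi (Wcox L) = coxeter (fun j => pi Ws ^ pi W0 ^+ j) 0 L.
Proof.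
rewrite /Wcox; elim: L 0 => [|L IHL] a; first by rewrite coxeter0.
by rewrite coxeterS /= piH_cat -IHL pi_wconj.
Qed.

Lemma pi_Wy : pi Wy = (pi W0)^-1 * pi W1.
Proof. by rewrite piH_cat piH_inv. Qed.

Lemma pi_Wcox_order L : pi (Wcox L) ^+ L.+1 = 1.
Proof.
(* Membership by position: proving it with [inE] would make Rocq unify
   distinct relator words, which is prohibitively slow. *)
pose rel k (lt_k : k < size relators) := mem_nth ([::], [::]) lt_k.
have yz := pi_commute (rel 0 isT); have yt2 := pi_commute (rel 1%N isT).
have yt3 := pi_commute (rel 2 isT); have sz := pi_commute (rel 3 isT).
have st2 := pi_commute (rel 4 isT); have st3 := pi_commute (rel 5 isT).
have st1 : pi (wpow (Ws ++ Wt 1%N) 3) = 1 := pi_relator (rel 6 isT).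
have s2 : pi (wpow Ws 2) = 1 := pi_relator (rel 7 isT).
rewrite pi_Wy (pi_wconj W1) in yz; rewrite pi_Wy !pi_wconj in yt2 yt3.
rewrite (pi_wconj W1) in sz; rewrite !pi_wconj in st2 st3.
rewrite pi_wpow piH_cat pi_wconj in st1; rewrite pi_wpow in s2.
by rewrite pi_Wcox; exact: (presented_coxeter_order yz yt2 yt3 sz st2 st3 st1 s2).
Qed.

End PresentedGroup.

Lemma not_in_H_pow (g : FF n) k y :
  iter k (act g.1) y <> iter k (act g.2) y -> ~ in_H SH (ff_pow g k).
Proof.
move=> neq /(act_in_H (lactK i0 i1) SH_act) /(_ y).
by have [-> ->] := act_ff_pow (lactK i0 i1) g k.
Qed.

Lemma is_Ord_la : is_Ord SH ([:: la i0], [::]) 0.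
Proof.
right; split=> // k k_gt0.
apply: (not_in_H_pow (y := ((pt 0, 0%R), 0%R))); rewrite iter_act_la iter_fix //.
by case=> /eqP; lia.
Qed.

Lemma is_Ord_Wcox L : is_Ord SH (Wcox L, [::]) L.+1.
Proof.
left; split=> //; split; first exact/(in_H_ff_pow SH_diag)/pi_Wcox_order.
move=> k /andP[k_gt0 le_kL]; apply: (not_in_H_pow (y := ((pt 1, 0%R), 0%R))).
rewrite (lifts_iter _ (lifts_Wcox L)) iter_fix //= iter_coxeter_c //.
by case=> /(congr1 (fun p => p 1)); case: k k_gt0 {le_kL}.
Qed.

Lemma SH_spectrum_full : Ord_spectrum_full SH.
Proof.
case=> [|L]; first by exists ([:: la i0], [::]); apply: is_Ord_la.
by exists (Wcox L, [::]); apply: is_Ord_Wcox.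
Qed.
End Construction.

Theorem proposition5p3 (n : nat) (hn : 2 <= n) :
  (exists S : seq (FF n), Ord_spectrum_full S)
  /\ ~ bounded_subgroup_spectra_FF n.
Proof.
pose i0 : 'I_n := Ordinal (ltnW hn); pose i1 : 'I_n := Ordinal hn.
have full : Ord_spectrum_full (SH i0 i1) := SH_spectrum_full (isT : i0 != i1).
split; first by exists (SH i0 i1).
move=> /(_ (SH i0 i1)) [B leB]; have [g ordg] := full B.+1.
by have := leB g _ ordg; rewrite ltnn.
Qed.
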